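(* Let $\mathcal{B}$ be a Boolean control network with state set $\mathcal{S}$. For any two nonempty sets of states $\mathsf{S}^1,\mathsf{S}^2\subseteq\mathcal{S}$, if $\mathsf{S}^1\subseteq\mathsf{S}^2$ and $\Gamma(\mathsf{S}^2)\ne\infty$, then $\Gamma(\mathsf{S}^1)\ne\infty$.
   Context: $\mathbb{B}=\{0,1\}$. A BCN has inputs $\mathcal{I}=\mathbb{B}^\ell$, states $\mathcal{S}=\mathbb{B}^m$, outputs $\mathcal{O}=\mathbb{B}^n$ and updating rules $\sigma:\mathcal{I}\times\mathcal{S}\to\mathcal{S}$, $\rho:\mathcal{S}\to\mathcal{O}$, with $\mathsf{s}(t+1)=\sigma(\mathsf{i}(t),\mathsf{s}(t))$, $\mathsf{o}(t)=\rho(\mathsf{s}(t))$. With $\varepsilon$ denoting empty input/output, let $\xi(\mathsf{i},\mathsf{s})=\sigma(\mathsf{i},\mathsf{s})$ for $\mathsf{i}\ne\varepsilon$, $\xi(\varepsilon,\mathsf{s})=\mathsf{s}$; for $\mathsf{S}\subseteq\mathcal{S}$, $\zeta(\mathsf{S},\mathsf{i},\mathsf{o})=\{\xi(\mathsf{i},\mathsf{s}):\mathsf{s}\in\mathsf{S},\rho(\xi(\mathsf{i},\mathsf{s}))=\mathsf{o}\}$ if $\mathsf{o}\ne\varepsilon$ and $\zeta(\mathsf{S},\mathsf{i},\varepsilon)=\{\xi(\mathsf{i},\mathsf{s}):\mathsf{s}\in\mathsf{S}\}$. For nonempty $\mathsf{S}$: $P_0(\mathsf{S})$ iff $|\mathsf{S}|=1$;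 $P_{n+1}(\mathsf{S})$ iff $|\mathsf{S}|=1$ or there is $\mathsf{i}\in\mathcal{I}$ with $|\zeta(\mathsf{S},\mathsf{i},\varepsilon)|=|\mathsf{S}|$ such that every nonempty $\zeta(\mathsf{S},\mathsf{i},\mathsf{o})$, $\mathsf{o}\in\mathcal{O}$, satisfies $P_n$. $\Gamma(\mathsf{S})\in\mathbb{N}\cup\{\infty\}$ is the least $n$ with $P_n(\mathsf{S})$, or $\infty$ if none (i.e. $\Gamma(\mathsf{S})=0$ if $|\mathsf{S}|=1$, and otherwise $\Gamma(\mathsf{S})=1+\min_{\mathsf{i}}\max_{\mathsf{o}}\Gamma(\zeta(\mathsf{S},\mathsf{i},\mathsf{o}))$ over inputs with $|\zeta(\mathsf{S},\mathsf{i},\varepsilon)|=|\mathsf{S}|$ and outputs with $\zeta(\mathsf{S},\mathsf{i},\mathsf{o})\ne\emptyset$). *)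

From mathcomp Require Import all_boot.
Set Implicit Arguments. Unset Strict Implicit. Unset Printing Implicit Defensive.

(* A Boolean control network with l inputs, m state variables, n outputs.
   I = B^l, S = B^m, O = B^n, represented as finite functions. *)
Definition Bvec (k : nat) := {ffun 'I_k -> bool}.

Record BCN (l m n : nat) := mkBCN {
  sigma : Bvec l -> Bvec m -> Bvec m;
  rho   : Bvec m -> Bvec n
}.

Section BCNdefs.
Variables (l m n : nat) (B : BCN l m n).

(* None encodes the empty input/output epsilon *)
Definition xi (i : option (Bvec l)) (s : Bvec m) : Bvec m :=
  match i with Some i' => sigma B i' s | None => s end.

Definition zeta (S : {set Bvec m}) (i : option (Bvec l)) (o : option (Bvec n))
  : {set Bvec m} :=
  match o with
  | Some o' => [set xi i s | s in S & rho B (xi i s) == o']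
  | None => [set xi i s | s in S]
  end.

(* P k S, for nonempty S *)
Fixpoint P (k : nat) (S : {set Bvec m}) : bool :=
  match k with
  | 0 => #|S| == 1
  | k'.+1 => (#|S| == 1) ||
      [exists i : Bvec l,
         (#|zeta S (Some i) None| == #|S|) &&
         [forall o : Bvec n,
            (zeta S (Some i) (Some o) != set0) ==> P k' (zeta S (Some i) (Some o))]]
  end.

(* Gamma S <> infinity  iff  P k S holds for some k *)
Definition Gamma_finite (S : {set Bvec m}) : Prop := exists k, P k S.

End BCNdefs.

From mathcomp Require Import all_boot.

(* Each P k is inherited by nonempty subsets: an input that is injective on
   S2 is injective on S1, and every output class of S1 is contained in the
   corresponding output class of S2. *)

Lemma cards1_subset {T : finType} {A C : {set T}} :
  A != set0 -> A \subset C -> #|C| = 1 -> #|A| = 1.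
Proof.
move=> A_neq0 sAC C1; apply/eqP.
by rewrite eqn_leq -C1 subset_leq_card //= C1 card_gt0.
Qed.

Lemma card_imset_subset {aT rT : finType} (f : aT -> rT) {A C : {set aT}} :
  A \subset C -> #|f @: C| = #|C| -> #|f @: A| = #|A|.
Proof.
move=> sAC /eqP /imset_injP injC; apply/eqP/imset_injP.
by move=> x y /(subsetP sAC) Cx /(subsetP sAC) Cy; apply: injC.
Qed.

Section BCNMonotonicity.
Variables (l m n : nat) (B : BCN l m n).

Lemma zetaS {S1 S2 : {set Bvec m}} i o :
  S1 \subset S2 -> zeta B S1 i o \subset zeta B S2 i o.
Proof.
move=> sS12; case: o => [o|] /=; apply: imsetS => //.
by apply/subsetP => s; rewrite !inE => /andP[/(subsetP sS12) -> ->].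
Qed.

Lemma P_subset k (S1 S2 : {set Bvec m}) :
  S1 != set0 -> S1 \subset S2 -> P B k S2 -> P B k S1.
Proof.
elim: k S1 S2 => [|k IHk] S1 S2 S1_neq0 sS12 /=.
  by move/eqP/(cards1_subset S1_neq0 sS12) ->.
case/orP=> [/eqP/(cards1_subset S1_neq0 sS12) -> //|].
case/existsP=> i /andP[/eqP inj2 /forallP Pzeta2].
apply/orP; right; apply/existsP; exists i; apply/andP; split.
  exact/eqP/(card_imset_subset _ sS12).
apply/forallP => o; apply/implyP => zeta1_neq0.
have sZ12 := zetaS (Some i) (Some o) sS12.
have zeta2_neq0 := subset_neq0 sZ12 zeta1_neq0.
exact: IHk zeta1_neq0 sZ12 (implyP (Pzeta2 o) zeta2_neq0).
Qed.

End BCNMonotonicity.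

Theorem lemma4 (l m n : nat) (B : BCN l m n) (S1 S2 : {set Bvec m}) :
  S1 != set0 -> S2 != set0 -> S1 \subset S2 ->
  Gamma_finite B S2 -> Gamma_finite B S1.
Proof.
move=> S1_neq0 _ sS12 [k Pk]; exists k.
exact: P_subset S1_neq0 sS12 Pk.
Qed.
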